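(* Let $D\in\{D_1,D_2,\dots,D_8\}$. For every positive integer $v$ with $v\equiv 7\pmod{14}$, there exists a $D$-decomposition of $K^*_v$.
   Context: $K^*_v$ denotes the complete symmetric digraph of order $v$: it contains both arcs $(x,y)$ and $(y,x)$ for every pair of distinct vertices $x,y$. A $D$-decomposition of a digraph $K$ is a set of subdigraphs of $K$, each isomorphic to $D$, such that every arc of $K$ lies in exactly one of them. For distinct vertices $v_0,\dots,v_6$, the digraphs $D_i[v_0,v_1,\dots,v_6]$ ($i\in[1,8]$) all have vertex set $\{v_0,\dots,v_6\}$ and the following arc sets: $D_1$: $(v_1,v_0),(v_1,v_2),(v_2,v_3),(v_3,v_4),(v_4,v_5),(v_5,v_6),(v_6,v_0)$; $D_2$: $(v_1,v_0),(v_2,v_1),(v_2,v_3),(v_3,v_4),(v_4,v_5),(v_5,v_6),(v_6,v_0)$; $D_3$: $(v_1,v_0),(v_1,v_2),(v_3,v_2),(v_3,v_4),(v_4,v_5),(v_5,v_6),(v_6,v_0)$; $D_4$: $(v_1,v_0),(v_1,v_2),(v_2,v_3),(v_4,v_3),(v_4,v_5),(v_5,v_6),(v_6,v_0)$; $D_5$: $(v_1,v_0),(v_2,v_1),(v_3,v_2),(v_3,v_4),(v_4,v_5),(v_5,v_6),(v_6,v_0)$; $D_6$: $(v_1,v_0),(v_2,v_1),(v_2,v_3),(v_3,v_4),(v_5,v_4),(v_5,v_6),(v_6,v_0)$; $D_7$: $(v_1,v_0),(v_1,v_2),(v_3,v_2),(v_3,v_4),(v_4,v_5),(v_6,v_5),(v_6,v_0)$;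 $D_8$: $(v_1,v_0),(v_2,v_1),(v_2,v_3),(v_4,v_3),(v_4,v_5),(v_5,v_6),(v_6,v_0)$. $D_i$ also denotes the isomorphism type of $D_i[v_0,\dots,v_6]$. *)

From mathcomp Require Import all_boot.
Set Implicit Arguments. Unset Strict Implicit. Unset Printing Implicit Defensive.

(* A digraph on vertices v_0..v_6 is given by its list of arcs (a,b),
   meaning the arc (v_a, v_b). *)
Definition digraph7 := seq (nat * nat).

Definition D1 : digraph7 := [:: (1,0); (1,2); (2,3); (3,4); (4,5); (5,6); (6,0)].
Definition D2 : digraph7 := [:: (1,0); (2,1); (2,3); (3,4); (4,5); (5,6); (6,0)].
Definition D3 : digraph7 := [:: (1,0); (1,2); (3,2); (3,4); (4,5); (5,6); (6,0)].
Definition D4 : digraph7 := [:: (1,0); (1,2); (2,3); (4,3); (4,5); (5,6); (6,0)].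
Definition D5 : digraph7 := [:: (1,0); (2,1); (3,2); (3,4); (4,5); (5,6); (6,0)].
Definition D6 : digraph7 := [:: (1,0); (2,1); (2,3); (3,4); (5,4); (5,6); (6,0)].
Definition D7 : digraph7 := [:: (1,0); (1,2); (3,2); (3,4); (4,5); (6,5); (6,0)].
Definition D8 : digraph7 := [:: (1,0); (2,1); (2,3); (4,3); (4,5); (5,6); (6,0)].

Definition Ds : seq digraph7 := [:: D1; D2; D3; D4; D5; D6; D7; D8].

(* A copy D[f 0, ..., f 6] of D inside K*_v, vertex set 'I_v, given by an
   injective vertex labelling f : 'I_7 -> 'I_v.  [copy_arc D f x y] says that
   (x,y) is an arc of the copy. *)
Definition copy_arc (v : nat) (D : digraph7) (f : {ffun 'I_7 -> 'I_v})
  (x y : 'I_v) : bool :=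
  has (fun p : nat * nat => (f (inord p.1) == x) && (f (inord p.2) == y)) D.

Definition is_decomposition (v : nat) (D : digraph7)
  (s : seq {ffun 'I_7 -> 'I_v}) : Prop :=
  all (fun f : {ffun 'I_7 -> 'I_v} => injectiveb f) s /\
  forall x y : 'I_v, x != y -> count (fun f => copy_arc D f x y) s = 1.

(* Identify the vertices of K*_v with Z_7 x Z_m, where m = v/7 = 2k+1.  The
   arcs inside a fibre Z_7 x {j} are covered by a fixed D-decomposition of
   K*_7 copied onto every fibre.  For the arcs between fibres, two base blocks
   put vertex u of D at (A u, level L u) with levels in {0,1,2}; their 14 arcs
   realise every pair (d, sign) of Z_7 x {+,-} exactly once as (difference of
   the A-coordinates, sign of the level jump), and the size of the jump only
   depends on d.  Scaling the levels by s in {1..k} and translating over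
   Z_7 x Z_m then covers every arc between fibres exactly once, because, m
   being odd, every nonzero element of Z_m is +-ns for exactly one s when
   n is 1 or 2.  The tables for D_1, ..., D_8 are checked by computation. *)

From mathcomp Require Import all_boot all_algebra zify.
Import GRing.Theory.

Set Implicit Arguments.
Unset Strict Implicit.
Unset Printing Implicit Defensive.

Definition arc {T : eqType} (E : seq ('I_7 * 'I_7)) (g : 'I_7 -> T) (x y : T) :=
  has (fun e => (g e.1 == x) && (g e.2 == y)) E.

Definition decomposition_family (E : seq ('I_7 * 'I_7)) (I T : finType)
    (h : I -> 'I_7 -> T) : Prop :=
  (forall i, injective (h i)) /\
  (forall x y : T, x != y -> #|[pred i | arc E (h i) x y]| = 1).

Definition arcs_of (D : digraph7) : seq ('I_7 * 'I_7) :=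
  [seq (inord p.1, inord p.2) | p <- D].

Lemma decomposition_of_family (D : digraph7) (I T : finType)
    (h : I -> 'I_7 -> T) (v : nat) :
  #|T| = v -> decomposition_family (arcs_of D) h ->
  exists s : seq {ffun 'I_7 -> 'I_v}, is_decomposition D s.
Proof.
move=> cardT [h_inj h_arc].
pose phi (x : T) : 'I_v := cast_ord cardT (enum_rank x).
pose psi (x : 'I_v) : T := enum_val (cast_ord (esym cardT) x).
have phiK : cancel phi psi by move=> x; rewrite /phi /psi cast_ordK enum_rankK.
have psiK : cancel psi phi by move=> x; rewrite /phi /psi enum_valK cast_ordKV.
exists [seq [ffun u => phi (h i u)] | i <- enum I]; split.
  apply/allP => _ /mapP [i _ ->]; apply/injectiveP => u u'.
  by rewrite !ffunE => /(can_inj phiK) /h_inj.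
move=> x y xy; have psi_xy : psi x != psi y.
  by apply: contra xy => /eqP /(can_inj psiK) ->.
rewrite count_map -[RHS](h_arc _ _ psi_xy) cardE size_filter enumT.
apply: eq_count => i /=; rewrite unfold_in /copy_arc /arc has_map.
apply: eq_has => p /=.
by rewrite !ffunE -{1}(psiK x) -{1}(psiK y) !(can_eq phiK).
Qed.

Section Steps.

Variable k : nat.
Local Notation m := (2 * k).+1.

Definition step (t : 'I_k) : 'I_m := inord t.+1.

Lemma val_step_mulrn t n : n <= 2 -> val (step t *+ n)%R = n * t.+1.
Proof.
move=> n_le2; have t_lt := ltn_ord t.
rewrite Zp_mulrn /= inordK ?modn_small; nia.
Qed.

Lemma val_step_mulrz t (z : int) : `|z| <= 2 ->
  val (step t *~ z)%R = if (0 <= z)%R then `|z| * t.+1 else m - `|z| * t.+1.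
Proof.
have t_lt := ltn_ord t.
case: z => n /= n_le2; first exact: val_step_mulrn.
rewrite val_step_mulrn // modn_small; nia.
Qed.

Lemma step_mulrz_eq0 t (z : int) : `|z| <= 2 -> (step t *~ z == 0)%R = (z == 0).
Proof.
move=> z_le2; have t_lt := ltn_ord t; rewrite -val_eqE val_step_mulrz //=.
by case: z z_le2 => n /= n_le2; apply/eqP/eqP; nia.
Qed.

Lemma step_mulrz_inj t t' (z z' : int) : 0 < `|z| <= 2 -> `|z| = `|z'| ->
  (step t *~ z = step t' *~ z')%R -> t = t' /\ z = z'.
Proof.
move=> /andP[z_gt0 z_le2] eq_abs /(congr1 val).
rewrite !val_step_mulrz -?eq_abs //.
have := ltn_ord t; have := ltn_ord t'.
by case: z z' eq_abs z_gt0 z_le2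
    => [[|[|[|?]]]|[|[|?]]] [[|[|[|?]]]|[|[|?]]] //= *;
  split; try apply: ord_inj; lia.
Qed.

Lemma step_mulrz_onto n (e : 'I_m) : 0 < n <= 2 -> e != 0%R ->
  exists t (z : int), `|z| = n /\ (step t *~ z)%R = e.
Proof.
move=> n_range e_neq0; have [n_gt0 n_le2] := andP n_range.
pose signed (s : bool) : int := if s then (- (n : int))%R else n.
have abs_signed s : `|signed s| = n by case: s; rewrite /= ?abszN.
(* Counting: the 2k elements [step t *~ (+-n)] are nonzero and distinct. *)
pose f (ts : option ('I_k * bool)) : 'I_m :=
  if ts is Some (t, s) then (step t *~ signed s)%R else 0%R.
have f_inj : injective f.
  have f_neq0 t s : (step t *~ signed s)%R != 0%R.
    by rewrite step_mulrz_eq0 ?abs_signed // -absz_eq0 abs_signed -lt0n.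
  move=> [[t s]|] [[t' s']|] //= eq_f; last 2 first.
  - by move: (f_neq0 t s); rewrite eq_f eqxx.
  - by move: (f_neq0 t' s'); rewrite -eq_f eqxx.
  have abs_range s'' : 0 < `|signed s''| <= 2 by rewrite abs_signed.
  have eq_abs : `|signed s| = `|signed s'| by rewrite !abs_signed.
  have [-> eq_signed] := step_mulrz_inj (abs_range s) eq_abs eq_f.
  by case: s s' eq_signed {eq_f eq_abs} => [] [] //= *; exfalso; lia.
have card_dom : #|'I_m| <= #|{: option ('I_k * bool)}|.
  by rewrite card_option card_prod card_bool !card_ord mulnC.
have /codomP [[[t s]|] e_eq] := inj_card_onto f_inj card_dom e.
  by exists t, (signed s).
by rewrite e_eq eqxx in e_neq0.
Qed.

End Steps.

Definition block_diff (G : zmodType) (B : Type) (A : B -> 'I_7 -> G)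
    (b : B) (e : 'I_7 * 'I_7) : G :=
  (A b e.2 - A b e.1)%R.

Definition level_diff (B : Type) (L : B -> 'I_7 -> nat)
    (b : B) (e : 'I_7 * 'I_7) : int :=
  (Posz (L b e.2) - Posz (L b e.1))%R.

Record difference_blocks (E : seq ('I_7 * 'I_7)) (G : zmodType) (B : Type)
    (A : B -> 'I_7 -> G) (L : B -> 'I_7 -> nat) : Prop := DifferenceBlocks {
  level_le2 : forall b u, L b u <= 2;
  block_inj : forall b, injective (fun u => (A b u, L b u));
  level_diff_neq0 : forall b e, e \in E -> level_diff L b e != 0%R;
  level_diff_abs : forall b b' e e', e \in E -> e' \in E ->
    block_diff A b e = block_diff A b' e' ->
    `|level_diff L b e| = `|level_diff L b' e'|;
  block_level_diff_inj : forall b b' e e', e \in E -> e' \in E ->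
    block_diff A b e = block_diff A b' e' ->
    level_diff L b e = level_diff L b' e' -> b = b' /\ e = e';
  block_diff_onto : forall d s, exists b, exists2 e, e \in E &
    block_diff A b e = d /\ (level_diff L b e < 0)%R = s
}.

Section Development.

Variables (E : seq ('I_7 * 'I_7)) (G : finZmodType) (R B : finType).
Variables (K : R -> 'I_7 -> G) (A : B -> 'I_7 -> G) (L : B -> 'I_7 -> nat).
Hypotheses (K_dec : decomposition_family E K) (AL : difference_blocks E A L).
Variable k : nat.
Local Notation m := (2 * k).+1.

Lemma level_dist_le2 b u u' : `|(Posz (L b u) - Posz (L b u'))%R| <= 2.
Proof.
have := level_le2 AL b u; have := level_le2 AL b u'.
by case: (leqP (L b u') (L b u)) => [/distnEl | /ltnW /distnEr] ->; lia.
Qed.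

Lemma level_diff_range b e : e \in E -> 0 < `|level_diff L b e| <= 2.
Proof. by move=> eE; rewrite absz_gt0 (level_diff_neq0 AL) ?level_dist_le2. Qed.

Lemma difference_unique (t t' : 'I_k) b b' e e' : e \in E -> e' \in E ->
  block_diff A b e = block_diff A b' e' ->
  (step t *~ level_diff L b e = step t' *~ level_diff L b' e')%R ->
  [/\ t = t', b = b' & e = e'].
Proof.
move=> eE e'E eq_A eq_L.
have [-> eq_diff] := step_mulrz_inj (level_diff_range b eE)
  (level_diff_abs AL eE e'E eq_A) eq_L.
by have [-> ->] := block_level_diff_inj AL eE e'E eq_A eq_diff.
Qed.

Lemma difference_cover d (z : 'I_m) : z != 0%R ->
  exists t b, exists2 e, e \in E &
    block_diff A b e = d /\ (step t *~ level_diff L b e)%R = z.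
Proof.
move=> z_neq0.
have [b0 [e0 e0E [d_e0 _]]] := block_diff_onto AL d true.
have [t [l [abs_l <-]]] := step_mulrz_onto (level_diff_range b0 e0E) z_neq0.
have [b [e eE [d_e sign_e]]] := block_diff_onto AL d (l < 0)%R.
exists t, b; exists e => //; split => //; congr (_ *~ _)%R.
rewrite [LHS]intEsign [RHS]intEsign sign_e abs_l.
by rewrite (level_diff_abs AL eE e0E (etrans d_e (esym d_e0))).
Qed.

Definition develop (i : R * 'I_m + 'I_k * B * G * 'I_m) (u : 'I_7) : G * 'I_m :=
  match i with
  | inl (r, j) => (K r u, j)
  | inr (t, b, c, j) => (c + A b u, j + step t *+ L b u)%R
  end.

Lemma develop_inj i : injective (develop i).
Proof.
case: i => [[r j] | [[[t b] c] j]] u u' /=; first by case=> /(K_dec.1 r).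
move=> eq_uu'; have eq_A := addrI _ (congr1 fst eq_uu').
have eq_L := addrI _ (congr1 snd eq_uu').
apply: (block_inj AL (b := b)); congr (_, _) => //.
have : (step t *~ (Posz (L b u') - Posz (L b u)) == 0)%R.
  by rewrite mulrzBr -!pmulrn eq_L subrr.
by rewrite step_mulrz_eq0 ?level_dist_le2 // subr_eq0 => /eqP [].
Qed.

Lemma arc_develop_fibre r j x y :
  arc E (develop (inl (r, j))) x y =
  [&& x.2 == j, y.2 == j & arc E (K r) x.1 y.1].
Proof.
case: x y => [xa xi] [ya yi]; apply/hasP/and3P => /=.
  case=> e eE /andP[/eqP[ex <-] /eqP[ey <-]]; rewrite !eqxx; split=> //.
  by apply/hasP; exists e; rewrite ?ex ?ey ?eqxx.
case=> /eqP <- /eqP <- /hasP[e eE /andP[/eqP ex /eqP ey]].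
by exists e; rewrite ?ex ?ey ?eqxx.
Qed.

Lemma arc_develop_blockP (t : 'I_k) b c j x y :
  reflect (exists2 e, e \in E & [/\ c = x.1 - A b e.1,
             j = x.2 - step t *+ L b e.1,
             block_diff A b e = y.1 - x.1 &
             step t *~ level_diff L b e = y.2 - x.2]%R)
    (arc E (develop (inr (t, b, c, j))) x y).
Proof.
have level_diffE e :
    (step t *~ level_diff L b e = step t *+ L b e.2 - step t *+ L b e.1)%R.
  by rewrite mulrzBr -!pmulrn.
case: x y => [xa xi] [ya yi]; apply: (iffP hasP) => -[e eE] /=.
  move=> /andP[/eqP[<- <-] /eqP[<- <-]]; exists e => //.
  rewrite !addrK level_diffE /block_diff (addrC c) addrKA (addrC j) addrKA.
  by split.
move=> [-> -> eq_A eq_L]; exists e => //.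
have shift_A : (xa - A b e.1 + A b e.2 = ya)%R.
  by rewrite addrAC -addrA -/(block_diff A b e) eq_A subrKC.
have shift_L : (xi - step t *+ L b e.1 + step t *+ L b e.2 = yi)%R.
  by rewrite addrAC -addrA -level_diffE eq_L subrKC.
by rewrite !subrK shift_A shift_L !eqxx.
Qed.

Lemma card_arc_develop_fibre xa ya xi : xa != ya ->
  #|[pred i | arc E (develop i) (xa, xi) (ya, xi)]| = 1.
Proof.
move=> xa_ya; have /eqP /card1P [r0 r0_arc] := K_dec.2 _ _ xa_ya.
have K_arc r : arc E (K r) xa ya = (r == r0) by have := r0_arc r; rewrite !inE.
apply: (@eq_card1 _ (inl (r0, xi))) => i; rewrite !inE; apply/idP/eqP.
  case: i => [[r j] | [[[t b] c] j]].
    by rewrite arc_develop_fibre K_arc => /and3P[/eqP <- _ /eqP ->].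
  case/arc_develop_blockP => e eE [_ _ _]; rewrite subrr => /eqP.
  have /andP[_ jump_le2] := level_diff_range b eE.
  by rewrite step_mulrz_eq0 // (negbTE (level_diff_neq0 AL b eE)).
by move=> ->; rewrite arc_develop_fibre K_arc !eqxx.
Qed.

Lemma card_arc_develop_block xa ya xi yi : xi != yi ->
  #|[pred i | arc E (develop i) (xa, xi) (ya, yi)]| = 1.
Proof.
move=> xi_yi; have z_neq0 : (yi - xi)%R != 0%R by rewrite subr_eq0 eq_sym.
have [t [b [e eE [eq_A eq_L]]]] := difference_cover (ya - xa)%R z_neq0.
pose i0 : R * 'I_m + 'I_k * B * G * 'I_m :=
  inr (t, b, xa - A b e.1, xi - step t *+ L b e.1)%R.
apply: (@eq_card1 _ i0) => i; rewrite !inE; apply/idP/eqP.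
  case: i => [[r j] | [[[t' b'] c] j]].
    rewrite arc_develop_fibre /= => /and3P[/eqP xi_j /eqP yi_j].
    by rewrite xi_j yi_j eqxx in xi_yi.
  case/arc_develop_blockP => e' e'E [-> -> eq_A' eq_L'].
  by have [-> -> ->] := difference_unique e'E eE (etrans eq_A' (esym eq_A))
    (etrans eq_L' (esym eq_L)).
by move=> ->; apply/arc_develop_blockP; exists e.
Qed.

Lemma develop_decomposition : decomposition_family E develop.
Proof.
split=> [i|[xa xi] [ya yi] xy]; first exact: develop_inj.
case: (eqVneq xi yi) xy => [<- | xi_yi] xy; last exact: card_arc_develop_block.
by apply: card_arc_develop_fibre; apply: contra xy => /eqP ->.
Qed.

End Development.

(* [ord_enum] and [inord] go through the opaque [idP] and are stuck under
   [vm_compute]; the checks below enumerate ordinals with [inZp] instead. *)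
Definition zp_enum n : seq 'I_n.+1 := [seq inZp i | i <- iota 0 n.+1].

Lemma zp_enumE n : zp_enum n = enum 'I_n.+1.
Proof.
apply: (inj_map val_inj); rewrite val_enum_ord -map_comp.
by apply: map_id_in => i; rewrite mem_iota /= => i_lt; rewrite modn_small.
Qed.

Lemma all_zp_enumP n (P : pred 'I_n.+1) :
  reflect (forall i, P i) (all P (zp_enum n)).
Proof.
by rewrite zp_enumE; apply: (iffP allP) => P_all i => [|_];
  rewrite ?P_all ?mem_enum.
Qed.

Lemma count_zp_enum n (P : pred 'I_n.+1) : count P (zp_enum n) = #|P|.
Proof. by rewrite zp_enumE cardE size_filter enumT. Qed.

Definition zp_arcs (D : digraph7) : seq ('I_7 * 'I_7) :=
  [seq (inZp p.1, inZp p.2) | p <- D].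

Lemma arcs_of_small (D : digraph7) :
  all (fun p => (p.1 < 7) && (p.2 < 7)) D -> arcs_of D = zp_arcs D.
Proof.
move=> /allP D_small; apply/eq_in_map => p /D_small /andP[p1 p2].
by congr (_, _); apply: val_inj; rewrite /= inordK // modn_small.
Qed.

Definition decomposition_familyb (E : seq ('I_7 * 'I_7)) (r n : nat)
    (h : 'I_r.+1 -> 'I_7 -> 'I_n.+1) : bool :=
  all (fun i => all (fun u => all (fun u' => (h i u == h i u') ==> (u == u'))
    (zp_enum 6)) (zp_enum 6)) (zp_enum r) &&
  all (fun x => all (fun y => (x != y) ==>
    (count (fun i => arc E (h i) x y) (zp_enum r) == 1))
    (zp_enum n)) (zp_enum n).

Lemma decomposition_familyP (E : seq ('I_7 * 'I_7)) (r n : nat)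
    (h : 'I_r.+1 -> 'I_7 -> 'I_n.+1) :
  decomposition_familyb E h -> decomposition_family E h.
Proof.
case/andP => /all_zp_enumP h_inj /all_zp_enumP h_arc; split.
  move=> i u u' /eqP eq_h; apply/eqP.
  by move: (h_inj i) => /all_zp_enumP/(_ u)/all_zp_enumP/(_ u')/implyP; apply.
move=> x y xy; apply/eqP; rewrite -count_zp_enum.
by move: (h_arc x) => /all_zp_enumP/(_ y)/implyP; apply.
Qed.

Definition difference_blocksb (E : seq ('I_7 * 'I_7)) (nb n : nat)
    (A : 'I_nb.+1 -> 'I_7 -> 'I_n.+1) (L : 'I_nb.+1 -> 'I_7 -> nat) : bool :=
  let blocks := zp_enum nb in let points := zp_enum 6 in
  [&& all (fun b => all (fun u => L b u <= 2) points) blocks,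
      all (fun b => all (fun u => all (fun u' =>
        ((A b u, L b u) == (A b u', L b u')) ==> (u == u'))
        points) points) blocks,
      all (fun b => all (fun e => level_diff L b e != 0%R) E) blocks,
      all (fun b => all (fun b' => all (fun e => all (fun e' =>
        (block_diff A b e == block_diff A b' e') ==>
        (`|level_diff L b e| == `|level_diff L b' e'|) &&
        ((level_diff L b e == level_diff L b' e') ==> (b == b') && (e == e')))
        E) E) blocks) blocks &
      all (fun d => all (fun s => has (fun b => has (fun e =>
        (block_diff A b e == d) && ((level_diff L b e < 0)%R == s)) E) blocks)
        [:: false; true]) (zp_enum n)].

Lemma difference_blocksP (E : seq ('I_7 * 'I_7)) (nb n : nat)
    (A : 'I_nb.+1 -> 'I_7 -> 'I_n.+1) (L : 'I_nb.+1 -> 'I_7 -> nat) :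
  difference_blocksb E A L -> difference_blocks E A L.
Proof.
case/and5P=> /all_zp_enumP levels /all_zp_enumP inj /all_zp_enumP neq0
  /all_zp_enumP diffs /all_zp_enumP onto.
have diffsP b b' e e' : e \in E -> e' \in E ->
    block_diff A b e = block_diff A b' e' ->
    (`|level_diff L b e| == `|level_diff L b' e'|) &&
    ((level_diff L b e == level_diff L b' e') ==> (b == b') && (e == e')).
  move=> eE e'E /eqP eq_A.
  move: (diffs b) => /all_zp_enumP/(_ b')/allP/(_ _ eE)/allP/(_ _ e'E).
  by move/implyP; apply.
split.
- by move=> b u; move/all_zp_enumP: (levels b); apply.
- move=> b u u' /= /eqP eq_u; apply/eqP.
  by move: (inj b) => /all_zp_enumP/(_ u)/all_zp_enumP/(_ u')/implyP; apply.
- by move=> b e eE; move/allP: (neq0 b); apply.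
- by move=> b b' e e' eE e'E /(diffsP _ _ _ _ eE e'E) /andP[/eqP].
- move=> b b' e e' eE e'E /(diffsP _ _ _ _ eE e'E) /andP[_ /implyP eq_L].
  move/eqP/eq_L.
  by case/andP=> /eqP -> /eqP ->.
move=> d s; move/allP: (onto d) => /(_ s); rewrite !inE; case: s => /(_ isT).
all: by case/hasP=> b _ /hasP[e eE /andP[/eqP <- /eqP <-]]; exists b, e.
Qed.

Definition table_entry (tab : seq (seq nat)) (i j : nat) : nat :=
  nth 0 (nth [::] tab i) j.

Definition zp_table n (tab : seq (seq nat)) (i : 'I_n) (u : 'I_7) : 'I_7 :=
  inZp (table_entry tab i u).

Definition design_tableb (D : digraph7)
    (tab : seq (seq nat) * seq (seq nat) * seq (seq nat)) : bool :=
  let: (fibres, shifts, levels) := tab in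
  [&& all (fun p => (p.1 < 7) && (p.2 < 7)) D,
      decomposition_familyb (zp_arcs D) (@zp_table 6 fibres) &
      difference_blocksb (zp_arcs D) (@zp_table 2 shifts)
        (fun b u => table_entry levels b u)].

(* One entry per D_i: six labellings of D decomposing K*_7, then row b of the
   Z_7-coordinates and row b of the levels of the two base blocks. *)
Definition designs : seq (seq (seq nat) * seq (seq nat) * seq (seq nat)) := [::
  ([:: [:: 1; 0; 2; 3; 4; 5; 6]; [:: 1; 2; 0; 3; 6; 5; 4]; [:: 1; 3; 0; 4; 6; 2; 5];
       [:: 3; 1; 4; 2; 6; 0; 5]; [:: 2; 1; 5; 0; 6; 4; 3]; [:: 0; 1; 6; 3; 5; 2; 4]],
   [:: [:: 0; 0; 1; 2; 4; 6; 2]; [:: 0; 0; 5; 2; 6; 5; 4]],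
   [:: [:: 0; 1; 0; 1; 0; 1; 2]; [:: 1; 0; 2; 0; 2; 0; 2]]);
  ([:: [:: 1; 0; 2; 3; 4; 5; 6]; [:: 1; 2; 0; 3; 6; 5; 4]; [:: 1; 3; 6; 0; 4; 2; 5];
       [:: 2; 6; 1; 4; 0; 5; 3]; [:: 6; 0; 1; 3; 5; 2; 4]; [:: 0; 5; 1; 2; 6; 4; 3]],
   [:: [:: 0; 0; 1; 1; 4; 6; 2]; [:: 0; 3; 6; 0; 1; 6; 1]],
   [:: [:: 0; 1; 0; 1; 0; 1; 2]; [:: 0; 2; 0; 2; 0; 2; 1]]);
  ([:: [:: 1; 0; 2; 3; 4; 5; 6]; [:: 1; 2; 3; 0; 4; 6; 5]; [:: 1; 3; 5; 0; 6; 2; 4];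
       [:: 0; 1; 2; 5; 3; 6; 4]; [:: 0; 6; 3; 1; 4; 2; 5]; [:: 0; 2; 6; 1; 5; 4; 3]],
   [:: [:: 0; 0; 1; 2; 1; 4; 2]; [:: 0; 0; 4; 3; 6; 1; 3]],
   [:: [:: 0; 1; 0; 1; 2; 0; 2]; [:: 1; 0; 1; 0; 2; 0; 2]]);
  ([:: [:: 1; 0; 2; 3; 4; 5; 6]; [:: 1; 2; 0; 3; 6; 5; 4]; [:: 1; 3; 0; 4; 6; 2; 5];
       [:: 2; 1; 3; 6; 4; 0; 5]; [:: 6; 1; 4; 2; 3; 5; 0]; [:: 4; 2; 6; 0; 1; 5; 3]],
   [:: [:: 0; 0; 1; 1; 3; 4; 1]; [:: 0; 4; 6; 1; 2; 5; 2]],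
   [:: [:: 0; 1; 0; 1; 0; 1; 2]; [:: 0; 2; 0; 2; 0; 2; 1]]);
  ([:: [:: 1; 0; 2; 3; 4; 5; 6]; [:: 1; 2; 0; 3; 6; 5; 4]; [:: 1; 3; 0; 4; 6; 2; 5];
       [:: 3; 6; 2; 1; 5; 0; 4]; [:: 3; 2; 4; 1; 6; 0; 5]; [:: 4; 6; 0; 1; 3; 5; 2]],
   [:: [:: 0; 0; 1; 2; 4; 4; 6]; [:: 0; 4; 6; 5; 2; 6; 4]],
   [:: [:: 0; 1; 0; 1; 0; 1; 2]; [:: 1; 0; 2; 0; 2; 0; 2]]);
  ([:: [:: 1; 0; 2; 3; 4; 5; 6]; [:: 1; 2; 0; 3; 5; 6; 4]; [:: 1; 3; 6; 0; 4; 2; 5];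
       [:: 2; 3; 4; 0; 5; 1; 6]; [:: 6; 0; 1; 4; 2; 5; 3]; [:: 0; 3; 1; 2; 6; 4; 5]],
   [:: [:: 0; 0; 1; 1; 2; 3; 4]; [:: 0; 5; 2; 4; 1; 4; 2]],
   [:: [:: 0; 1; 0; 1; 0; 1; 2]; [:: 0; 2; 0; 2; 1; 0; 2]]);
  ([:: [:: 1; 0; 2; 3; 4; 5; 6]; [:: 1; 2; 3; 0; 4; 6; 5]; [:: 1; 3; 5; 0; 6; 2; 4];
       [:: 0; 1; 2; 5; 4; 3; 6]; [:: 0; 5; 3; 1; 6; 4; 2]; [:: 6; 2; 5; 1; 4; 0; 3]],
   [:: [:: 0; 0; 1; 2; 1; 4; 2]; [:: 0; 0; 2; 4; 0; 4; 3]],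
   [:: [:: 0; 1; 0; 1; 2; 0; 2]; [:: 1; 0; 2; 0; 2; 1; 0]]);
  ([:: [:: 1; 0; 2; 3; 4; 5; 6]; [:: 1; 2; 0; 3; 6; 5; 4]; [:: 2; 4; 0; 5; 1; 3; 6];
       [:: 4; 1; 5; 2; 3; 0; 6]; [:: 6; 2; 1; 0; 5; 3; 4]; [:: 0; 4; 2; 5; 3; 1; 6]],
   [:: [:: 0; 0; 1; 1; 3; 4; 3]; [:: 0; 4; 2; 6; 1; 3; 6]],
   [:: [:: 0; 1; 0; 1; 0; 2; 1]; [:: 0; 2; 0; 1; 2; 0; 2]])].

Lemma designs_cover : all (fun D => has (design_tableb D) designs) Ds.
Proof. by vm_compute. Qed.

Theorem lemma3p5 (D : digraph7) (HD : D \in Ds) (v : nat) (Hv : 0 < v)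
  (Hmod : v %% 14 = 7) :
  exists s : seq {ffun 'I_7 -> 'I_v}, is_decomposition D s.
Proof.
have /hasP [[[fibres shifts] levels] _] := allP designs_cover D HD.
case/and3P=> /arcs_of_small D_arcs /decomposition_familyP K_dec.
move/difference_blocksP=> AL.
rewrite -D_arcs in K_dec AL.
apply: decomposition_of_family (develop_decomposition K_dec AL (v %/ 14)).
by rewrite card_prod !card_ord; lia.
Qed.
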